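(* Let $t\ge3$, let $\mathcal C$ be an $(n,k,r,t)$-SLRC and let $G$ be a minimal repair graph of $\mathcal C$ with source set $S(G)$. Then for every $v\in S(G)$: 1) $|\mathrm{Out}(v)|\ge1$; 2) if $\mathrm{Out}(v)=\{v'\}$, then $\mathrm{Out}^2(v)=\mathrm{Out}(v')\ne\emptyset$; 3) if $\mathrm{Out}(v)=\{v_1\}$ and $\mathrm{Out}(v_1)=\{v_2\}$, then $\mathrm{Out}(v_2)\ne\emptyset$; 4) if $\mathrm{Out}(v)=\{v_1\}$ and $\mathrm{Out}(v_1)=\{v_2\}$, then $|\mathrm{Out}(u)|\ge2$ for every source $u\in\mathrm{In}(v_2)$; 5) if $v,w$ are two distinct sources with $|\mathrm{Out}(v)|=|\mathrm{Out}(w)|=1$, then $\mathrm{Out}(v)\ne\mathrm{Out}(w)$.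
   Context: For an $[n,k]$ linear code $\mathcal C$ over a finite field $\mathbb F$, a recovering set of $i\in[n]$ is a set $R\subseteq[n]\setminus\{i\}$ with nonzero $a_j\in\mathbb F$ such that $x_i=\sum_{j\in R}a_jx_j$ for all $x\in\mathcal C$; standing assumption: recovering sets have size $2\le|R|\le r<k$. $\mathcal C$ is an $(n,k,r,t)$-SLRC if every $E\subseteq[n]$ with $|E|\le t$ can be indexed $\{i_1,\dots,i_{|E|}\}$ so that each $i_\ell$ has a recovering set $R_\ell\subseteq([n]\setminus E)\cup\{i_1,\dots,i_{\ell-1}\}$. A repair graph of $\mathcal C$ is a directed acyclic graph on vertex set $[n]$ such that for every vertex $i$ with nonempty in-neighbourhood $\mathrm{In}(i)$, $\mathrm{In}(i)$ is a recovering set of $i$. A source is a vertex with no in-neighbours. A minimal repair graph is a repair graph with the minimum number of sources among all repair graphs of $\mathcal C$. $\mathrm{Out}(v)$ denotes the out-neighbours of $v$, and $\mathrm{Out}^2(v)=\bigcup_{u\in\mathrm{Out}(v)}\mathrm{Out}(u)\setminus\mathrm{Out}(v)$. *)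

From HB Require Import structures.
From mathcomp Require Import all_boot all_order all_algebra all_fingroup all_field.
Set Implicit Arguments. Unset Strict Implicit. Unset Printing Implicit Defensive.
Import GRing.Theory.
Local Open Scope ring_scope.

Definition recovering_set (F : finFieldType) (n r : nat)
  (C : {vspace 'rV[F]_n}) (i : 'I_n) (R : {set 'I_n}) : Prop :=
  [/\ i \notin R, (2 <= #|R|)%N, (#|R| <= r)%N &
   exists a : 'I_n -> F, (forall j, j \in R -> a j != 0) /\
     (forall x, x \in C -> x 0 i = \sum_(j in R) a j * x 0 j)].

(* (n,k,r,t)-SLRC property (dimension k and r < k are separate hypotheses):
   every set E of at most t erased coordinates can be listed as a duplicate-free
   sequence s = [i_1; ...; i_|E|] such that each i_l has a recovering set inside
   ([n] \ E) u {i_1, ..., i_(l-1)}. *)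
Definition SLRC (F : finFieldType) (n r t : nat) (C : {vspace 'rV[F]_n}) : Prop :=
  forall E : {set 'I_n}, (#|E| <= t)%N ->
    exists s : seq 'I_n, [/\ uniq s, [set x in s] = E &
      forall (s1 : seq 'I_n) (i : 'I_n) (s2 : seq 'I_n), s = s1 ++ i :: s2 ->
        exists R : {set 'I_n},
          recovering_set r C i R /\ R \subset (~: E) :|: [set x in s1]].

(* Directed graphs on [n] are edge relations e : rel 'I_n (e u v = edge u -> v). *)
Definition In_nb (n : nat) (e : rel 'I_n) (v : 'I_n) : {set 'I_n} := [set u | e u v].
Definition Out_nb (n : nat) (e : rel 'I_n) (v : 'I_n) : {set 'I_n} := [set u | e v u].
Definition Out2_nb (n : nat) (e : rel 'I_n) (v : 'I_n) : {set 'I_n} :=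
  (\bigcup_(u in Out_nb e v) Out_nb e u) :\: Out_nb e v.

Definition acyclic (n : nat) (e : rel 'I_n) : Prop :=
  forall u v, e u v -> ~~ connect e v u.

Definition is_source (n : nat) (e : rel 'I_n) (v : 'I_n) : bool := In_nb e v == set0.
Definition sources (n : nat) (e : rel 'I_n) : {set 'I_n} := [set v | is_source e v].

Definition repair_graph (F : finFieldType) (n r : nat) (C : {vspace 'rV[F]_n})
  (e : rel 'I_n) : Prop :=
  acyclic e /\
  forall i, In_nb e i != set0 -> recovering_set r C i (In_nb e i).

Definition minimal_repair_graph (F : finFieldType) (n r : nat)
  (C : {vspace 'rV[F]_n}) (e : rel 'I_n) : Prop :=
  repair_graph r C e /\
  forall e' : rel 'I_n, repair_graph r C e' -> (#|sources e| <= #|sources e'|)%N.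

From HB Require Import structures.
From mathcomp Require Import all_boot all_order all_algebra all_fingroup all_field.

Set Implicit Arguments. Unset Strict Implicit. Unset Printing Implicit Defensive.

(* An out-closed set E of at most t vertices of a minimal repair
   graph contains no source: the SLRC property orders E so that each vertex of
   E is recovered from outside E and from earlier vertices of E, and redirecting
   the in-edges of E accordingly yields a repair graph whose sources are those
   of G outside E.  Moreover, if a source u has a single out-neighbour y, then y
   together with the other in-neighbours of y recovers u, and reversing the edge
   u -> y yields another minimal repair graph.  Each item then exhibits an
   out-closed set of at most three vertices containing a source, either in G or
   after one such reversal. *)

Section RecoveringSets.
Import GRing.Theory.
Local Open Scope ring_scope.

Variables (F : finFieldType) (n r : nat) (C : {vspace 'rV[F]_n}).

Lemma recovering_set_exchange (R : {set 'I_n}) u y :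
  recovering_set r C y R -> u \in R -> recovering_set r C u (y |: (R :\ u)).
Proof.
case=> yR R2 Rr [a [a_neq0 recy]] uR.
have yRu : y \notin R :\ u by rewrite inE negb_and yR orbT.
have card_exch : #|y |: (R :\ u)| = #|R| by rewrite cardsU1 yRu [RHS](cardsD1 u) uR.
have au0 := a_neq0 u uR.
split; rewrite ?card_exch //.
  by rewrite !inE eqxx /= orbF; apply: contraNneq yR => <-.
exists (fun j => if j == y then (a u)^-1 else - ((a u)^-1 * a j)); split.
  move=> j; rewrite !inE; case: eqP => _ /=; first by rewrite invr_eq0.
  by case/andP=> _ jR; rewrite oppr_eq0 mulf_neq0 ?invr_eq0 ?a_neq0.
move=> x xC; rewrite big_setU1 //= eqxx.
(* x_u = a_u^-1 (x_y - \sum_{j in R, j != u} a_j x_j) *)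
have -> : \sum_(j in R :\ u) (if j == y then (a u)^-1 else - ((a u)^-1 * a j)) * x 0 j
        = - ((a u)^-1 * \sum_(j in R | j != u) a j * x 0 j).
  rewrite mulr_sumr -sumrN (eq_bigl (fun j => (j \in R) && (j != u))); last first.
    by move=> j; rewrite !inE andbC.
  apply: eq_bigr => j /andP[jR _].
  have /negbTE -> : j != y by apply: contraNneq yR => <-.
  by rewrite mulrA mulNr.
by rewrite (recy x xC) (bigD1 u) //= mulrDr mulrA mulVf // mul1r addrK.
Qed.

End RecoveringSets.

Section RepairGraphSurgery.

Variables (F : finFieldType) (n r : nat) (C : {vspace 'rV[F]_n}).

Lemma acyclic_by_preorder (e Q : rel 'I_n) :
  reflexive Q -> transitive Q -> (forall x z, e x z -> Q x z && ~~ Q z x) ->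
  acyclic e.
Proof.
move=> Qrefl Qtrans eQ u v /eQ /andP[_]; apply: contra => /connectP[p].
elim: p v => [|z p IHp] x /=; first by move=> _ ->.
by case/andP=> /eQ /andP[Qxz _] pz endp; apply: Qtrans Qxz (IHp z pz endp).
Qed.

Definition rewire (e : rel 'I_n) (E : {set 'I_n}) (R : 'I_n -> {set 'I_n}) :
  rel 'I_n := fun x z => if z \in E then x \in R z else e x z.

Lemma In_rewire (e : rel 'I_n) E R z :
  In_nb (rewire e E R) z = if z \in E then R z else In_nb e z.
Proof. by case: ifP => zE; apply/setP => x; rewrite !inE /rewire zE. Qed.

Section Rewire.

Variables (e : rel 'I_n) (E : {set 'I_n}) (R : 'I_n -> {set 'I_n}) (rk : 'I_n -> nat).
Hypothesis closedE : {in E, forall x, Out_nb e x \subset E}.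
Hypothesis rk_R : forall z x, z \in E -> x \in E -> x \in R z -> rk x < rk z.

Lemma rewire_acyclic : acyclic e -> acyclic (rewire e E R).
Proof.
(* outside E: reachability in e; above it, E ordered by rank *)
move=> acy; pose Q := [rel x z | if z \in E then (x \in E) ==> (rk x <= rk z)
                                 else (x \notin E) && connect e x z].
apply: (@acyclic_by_preorder _ Q) => [x | y x z | x z] /=.
- by case: ifP => xE; rewrite ?xE ?leqnn ?connect0.
- case: (boolP (y \in E)) => yE; case: (boolP (z \in E)) => zE //=.
  + by move=> /implyP xy yz; apply/implyP => /xy /leq_trans; apply.
  + by case/andP=> /negbTE ->.
  + by case/andP=> -> xy; apply: connect_trans.
rewrite /rewire; case: (boolP (z \in E)) => zE; case: (boolP (x \in E)) => xE //= exz.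
- by have rk_xz := rk_R zE xE exz; rewrite -ltnNge rk_xz ltnW.
- by move: zE; rewrite (subsetP (closedE xE)) // inE.
- by rewrite connect1 //= (negbTE (acy _ _ exz)).
Qed.

Lemma rewire_repair_graph :
  repair_graph r C e -> (forall z, z \in E -> recovering_set r C z (R z)) ->
  repair_graph r C (rewire e E R).
Proof.
case=> acy rec recR; split; first exact: rewire_acyclic.
by move=> z; rewrite In_rewire; case: ifP => [zE _|_]; [apply: recR | apply: rec].
Qed.

Lemma sources_rewire_subset :
  (forall z, z \in E -> R z != set0) -> sources (rewire e E R) \subset sources e :\: E.
Proof.
move=> R_neq0; apply/subsetP => z; rewrite !inE /is_source In_rewire.
by case: ifP => zE; rewrite ?(negbTE (R_neq0 z zE)).
Qed.

End Rewire.

Lemma SLRC_ranked_recovering_sets t (E : {set 'I_n}) :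
  SLRC r t C -> #|E| <= t ->
  exists (rk : 'I_n -> nat) (R : 'I_n -> {set 'I_n}), forall z, z \in E ->
    recovering_set r C z (R z) /\ forall x, x \in E -> x \in R z -> rk x < rk z.
Proof.
move=> slrc cardE; have [s [_ sE recs]] := slrc E cardE.
have recE z : exists R, z \in E ->
    recovering_set r C z R /\ R \subset ~: E :|: [set x in take (index z s) s].
  case: (boolP (z \in E)) => [zE|]; last by exists set0.
  have zs : z \in s by rewrite -sE inE in zE.
  have split_s : s = take (index z s) s ++ z :: drop (index z s).+1 s.
    by rewrite -{2}(nth_index z zs) -drop_nth ?index_mem // cat_take_drop.
  by have [R recR] := recs _ _ _ split_s; exists R.
have [R recR] := fin_all_exists recE.
exists (index^~ s), R => z zE; have [recz subR] := recR z zE.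
split=> // x xE /(subsetP subR); rewrite !inE xE /=.
exact: index_ltn.
Qed.

Lemma minimal_closed_no_source t e (E : {set 'I_n}) v :
  SLRC r t C -> minimal_repair_graph r C e -> #|E| <= t ->
  {in E, forall x, Out_nb e x \subset E} -> v \in E -> v \notin sources e.
Proof.
move=> slrc [rg minimal] cardE closedE vE; apply/negP => vS.
have [rk [R recR]] := SLRC_ranked_recovering_sets slrc cardE.
have rk_R z x : z \in E -> x \in E -> x \in R z -> rk x < rk z.
  by move=> zE; apply: (recR z zE).2.
have rg' := rewire_repair_graph closedE rk_R rg (fun z zE => (recR z zE).1).
have R_neq0 z : z \in E -> R z != set0.
  by move=> /recR[[_ R2 _ _] _]; rewrite -card_gt0 (leq_trans _ R2).
have le_sources : #|sources e| <= #|sources e :\ v|.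
  apply: leq_trans (minimal _ rg') (subset_leq_card _).
  apply: subset_trans (sources_rewire_subset e R_neq0) _.
  by rewrite setDS ?sub1set.
by rewrite leqNgt proper_card ?properD1 in le_sources.
Qed.

Lemma minimal_closed_seq_no_source t e (s : seq 'I_n) v :
  SLRC r t C -> minimal_repair_graph r C e -> size s <= t ->
  {in [set x in s], forall x, Out_nb e x \subset [set x in s]} -> v \in s ->
  v \notin sources e.
Proof.
move=> slrc mrg st closed_s vs; apply: minimal_closed_no_source slrc mrg _ closed_s _.
  by rewrite cardsE (leq_trans (card_size s)).
by rewrite inE.
Qed.

Lemma edge_to_source (e : rel 'I_n) x v : v \in sources e -> e x v = false.
Proof. by rewrite inE => /eqP/setP/(_ x); rewrite !inE. Qed.

Lemma acyclic_irreflexive (e : rel 'I_n) : acyclic e -> irreflexive e.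
Proof. by move=> acy x; apply/negP => /acy; rewrite connect0. Qed.

Lemma edge_Out_set1 (e : rel 'I_n) x y z : Out_nb e x = [set y] -> e x z = (z == y).
Proof. by move/setP/(_ z); rewrite !inE. Qed.

Lemma Out2_nb_set1 (e : rel 'I_n) v v' :
  acyclic e -> Out_nb e v = [set v'] -> Out2_nb e v = Out_nb e v'.
Proof.
move=> acy Ov; apply/setP => z; rewrite /Out2_nb Ov big_set1 !inE.
by case: eqP => // ->; rewrite acyclic_irreflexive.
Qed.

(* Reversing the edge u -> y out of a source u whose only out-neighbour is y:
   u is then repaired from y and the other in-neighbours of y. *)
Definition flip_source (e : rel 'I_n) (u y : 'I_n) : rel 'I_n :=
  fun x z => (z != y) && if z == u then (x == y) || e x y && (x != u) else e x z.

Section FlipSource.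

Variables (e : rel 'I_n) (u y : 'I_n).
Hypotheses (acy : acyclic e) (Ou : Out_nb e u = [set y]).

Lemma Out_set1_neq : u != y.
Proof.
apply: contraFneq (acyclic_irreflexive acy u) => uy.
by rewrite {2}uy (edge_Out_set1 _ Ou).
Qed.

Lemma In_flip_source_src : In_nb (flip_source e u y) u = y |: (In_nb e y :\ u).
Proof.
by apply/setP => x; rewrite !inE /flip_source Out_set1_neq eqxx [e x y && _]andbC.
Qed.

Lemma In_flip_source x :
  x != y -> x != u -> In_nb (flip_source e u y) x = In_nb e x.
Proof.
by move=> /negbTE xy /negbTE xu; apply/setP => z; rewrite !inE /flip_source xy xu.
Qed.

Lemma Out_flip_source_sub x :
  Out_nb (flip_source e u y) x \subset u |: (Out_nb e x :\ y).
Proof.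
apply/subsetP => z; rewrite !inE /flip_source.
by case/andP=> ->; case: eqP => //= _ ->; rewrite orbT.
Qed.

Lemma flip_source_closed (E : {set 'I_n}) :
  {in E, forall x, Out_nb e x :\ y \subset E} -> u \in E ->
  {in E, forall x, Out_nb (flip_source e u y) x \subset E}.
Proof.
move=> closedE uE x xE; apply: subset_trans (Out_flip_source_sub x) _.
by rewrite subUset sub1set uE closedE.
Qed.

Lemma flip_source_acyclic : acyclic (flip_source e u y).
Proof.
(* y at the bottom, u at the top, reachability in e in between *)
pose Q := [rel x z | if z == u then true else if x == u then false
                     else if z == y then x == y else connect e x z].
apply: (@acyclic_by_preorder _ Q) => [x | b a c | x z] /=.
- by do 3?case: eqP => //; rewrite connect0.
- have [//|cu] := eqVneq c u; have [_|bu] := eqVneq b u; first by case: (a == u).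
  have [//|au] := eqVneq a u; have [_ ab /eqP bE|cy] := eqVneq c y.
    by move: ab; rewrite bE eqxx.
  have [-> /eqP -> //|by'] := eqVneq b y.
  exact: connect_trans.
rewrite /flip_source => /andP[/negbTE zy].
have [zu exu|zu exz] := eqVneq z u.
  have xu : x != u.
    by case/orP: exu => [/eqP->|/andP[]//]; rewrite eq_sym Out_set1_neq.
  by rewrite (negbTE xu).
have xu : x != u by apply: contraTneq exz => ->; rewrite (edge_Out_set1 _ Ou) zy.
rewrite (negbTE xu) zy connect1 //=.
by case: eqP => // _; exact: acy exz.
Qed.

Lemma flip_source_repair_graph :
  repair_graph r C e -> repair_graph r C (flip_source e u y).
Proof.
case=> _ rec; split=> [|x]; first exact: flip_source_acyclic.
have [->|xy] := eqVneq x y.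
  by case/set0Pn=> z; rewrite inE /flip_source eqxx.
have [->|xu] := eqVneq x u; last by rewrite In_flip_source //; apply: rec.
have uIy : u \in In_nb e y by rewrite inE (edge_Out_set1 _ Ou).
have recy : recovering_set r C y (In_nb e y) by apply: rec; apply/set0Pn; exists u.
by move=> _; rewrite In_flip_source_src; apply: recovering_set_exchange recy uIy.
Qed.

Lemma sources_flip_source :
  u \in sources e -> #|sources (flip_source e u y)| <= #|sources e|.
Proof.
move=> uS; have sub : sources (flip_source e u y) \subset y |: (sources e :\ u).
  apply/subsetP => x; rewrite !inE /is_source.
  have [//|xy] := eqVneq x y; have [->|xu] := eqVneq x u.
    rewrite In_flip_source_src; apply: contraTT => _.
    by apply/set0Pn; exists y; rewrite !inE eqxx.
  by rewrite In_flip_source.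
apply: leq_trans (subset_leq_card sub) _.
by rewrite cardsU1 [X in _ <= X](cardsD1 u) uS leq_add2r leq_b1.
Qed.

Lemma flip_source_minimal :
  minimal_repair_graph r C e -> u \in sources e ->
  minimal_repair_graph r C (flip_source e u y).
Proof.
case=> rg minimal uS; split; first exact: flip_source_repair_graph.
by move=> e' /minimal; apply: leq_trans (sources_flip_source uS).
Qed.

End FlipSource.

End RepairGraphSurgery.

Section MinimalRepairGraph.

Variables (F : finFieldType) (n r t : nat) (C : {vspace 'rV[F]_n}) (e : rel 'I_n).
Hypotheses (slrc : SLRC r t C) (mrg : minimal_repair_graph r C e).

Let acy : acyclic e := mrg.1.1.

Lemma source_Out_neq0 v : 0 < t -> v \in sources e -> Out_nb e v != set0.
Proof.
move=> t_gt0 vS; apply/negP => /eqP Ov.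
suff : v \notin sources e by rewrite vS.
apply: (minimal_closed_seq_no_source (s := [:: v])) slrc mrg t_gt0 _ _.
- by move=> x; rewrite !inE => /eqP ->; rewrite Ov sub0set.
- by rewrite inE.
Qed.

Lemma source_Out_set1_Out_neq0 v v' :
  1 < t -> v \in sources e -> Out_nb e v = [set v'] -> Out_nb e v' != set0.
Proof.
move=> t2 vS Ov; apply/negP => /eqP Ov'.
suff : v \notin sources e by rewrite vS.
apply: (minimal_closed_seq_no_source (s := [:: v; v'])) slrc mrg t2 _ _.
- move=> x; rewrite !inE => /orP[]/eqP->; rewrite ?Ov ?Ov' ?sub0set //.
  by rewrite sub1set !inE eqxx orbT.
- by rewrite !inE eqxx.
Qed.

Lemma source_Out_path2_Out_neq0 v v1 v2 :
  2 < t -> v \in sources e -> Out_nb e v = [set v1] -> Out_nb e v1 = [set v2] ->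
  Out_nb e v2 != set0.
Proof.
move=> t3 vS Ov Ov1; apply/negP => /eqP Ov2.
suff : v \notin sources e by rewrite vS.
apply: (minimal_closed_seq_no_source (s := [:: v; v1; v2])) slrc mrg t3 _ _.
- move=> x; rewrite !inE => /or3P[]/eqP->; rewrite ?Ov ?Ov1 ?Ov2 ?sub0set //.
  + by rewrite sub1set !inE eqxx /= orbT.
  + by rewrite sub1set !inE eqxx /= !orbT.
- by rewrite !inE eqxx.
Qed.

Lemma source_Out_path2_In_source v v1 v2 u :
  2 < t -> v \in sources e -> Out_nb e v = [set v1] -> Out_nb e v1 = [set v2] ->
  u \in sources e -> u \in In_nb e v2 -> 1 < #|Out_nb e u|.
Proof.
move=> t3 vS Ov Ov1 uS; rewrite inE => euv2; rewrite ltnNge; apply/negP => Ou1.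
have Ou : Out_nb e u = [set v2].
  by apply/esym/eqP; rewrite eqEcard sub1set inE euv2 cards1.
have ev1v2 : e v1 v2 by rewrite (edge_Out_set1 _ Ov1).
have v1_neq_v2 : v1 != v2.
  by apply: contraFneq (acyclic_irreflexive acy v1) => v12; rewrite {2}v12.
have v_neq_u : v != u.
  by apply: contraNneq v1_neq_v2 => vu; move: Ov; rewrite vu Ou => /set1_inj ->.
have v_neq_v2 : v != v2 by apply: contraTneq ev1v2 => <-; rewrite edge_to_source.
have mrg' := flip_source_minimal acy Ou mrg uS.
suff : v \in sources (flip_source e u v2).
  apply/negP.
  apply: (minimal_closed_seq_no_source (s := [:: v; v1; u])) slrc mrg' t3 _ _.
  - apply: flip_source_closed; last by rewrite !inE eqxx !orbT.
    move=> x; rewrite !inE => /or3P[]/eqP->; rewrite ?Ov ?Ov1 ?Ou ?setDv ?sub0set //.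
    by apply: subset_trans (subsetDl _ _) _; rewrite sub1set !inE eqxx /= orbT.
  - by rewrite !inE eqxx.
by move: vS; rewrite !inE /is_source In_flip_source.
Qed.

Lemma sources_Out_card1_neq v w :
  1 < t -> v \in sources e -> w \in sources e -> v != w ->
  #|Out_nb e v| = 1 -> #|Out_nb e w| = 1 -> Out_nb e v != Out_nb e w.
Proof.
move=> t2 vS wS v_neq_w /eqP/cards1P[y Ov] _; apply/negP => /eqP Ovw.
have Ow : Out_nb e w = [set y] by rewrite -Ovw.
have w_neq_y : w != y.
  apply: contraTneq wS => ->; rewrite inE /is_source.
  by apply/set0Pn; exists v; rewrite inE (edge_Out_set1 _ Ov).
have mrg' := flip_source_minimal acy Ov mrg vS.
suff : w \in sources (flip_source e v y).
  apply/negP.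
  apply: (minimal_closed_seq_no_source (s := [:: w; v])) slrc mrg' t2 _ _.
  - apply: flip_source_closed; last by rewrite !inE eqxx orbT.
    by move=> x; rewrite !inE => /orP[]/eqP->; rewrite ?Ov ?Ow setDv sub0set.
  - by rewrite !inE eqxx.
by move: wS; rewrite !inE /is_source In_flip_source // eq_sym.
Qed.

End MinimalRepairGraph.

Theorem corollary1 (F : finFieldType) (n k r t : nat) (C : {vspace 'rV[F]_n})
  (e : rel 'I_n) :
  (3 <= t)%N -> \dim C = k -> (r < k)%N -> SLRC r t C ->
  minimal_repair_graph r C e ->
  (forall v, v \in sources e ->
     [/\ (1 <= #|Out_nb e v|)%N,
         (forall v', Out_nb e v = [set v'] ->
            Out2_nb e v = Out_nb e v' /\ Out_nb e v' != set0),
         (forall v1 v2, Out_nb e v = [set v1] -> Out_nb e v1 = [set v2] ->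
            Out_nb e v2 != set0) &
         (forall v1 v2, Out_nb e v = [set v1] -> Out_nb e v1 = [set v2] ->
            forall u, u \in sources e -> u \in In_nb e v2 ->
              (2 <= #|Out_nb e u|)%N)]) /\
  (forall v w, v \in sources e -> w \in sources e -> v != w ->
     #|Out_nb e v| = 1%N -> #|Out_nb e w| = 1%N -> Out_nb e v != Out_nb e w).
Proof.
move=> t3 _ _ slrc mrg; have t2 := ltnW t3; have t1 := ltnW t2.
split=> [v vS|v w]; last exact: (sources_Out_card1_neq slrc mrg t2).
split=> [|v' Ov|v1 v2 Ov Ov1|v1 v2 Ov Ov1 u].
- by rewrite card_gt0 (source_Out_neq0 slrc mrg).
- by rewrite (Out2_nb_set1 mrg.1.1 Ov) (source_Out_set1_Out_neq0 slrc mrg t2 vS Ov).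
- exact: (source_Out_path2_Out_neq0 slrc mrg t3 vS Ov Ov1).
- exact: (source_Out_path2_In_source slrc mrg t3 vS Ov Ov1).
Qed.
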